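(* Let $\mathbf{Y}=(\{0,1\}^{\mathbb{Z}},\mathcal{B},\nu,S)$ with $\nu=(\tfrac12(\delta_0+\delta_1))^{\otimes\mathbb{Z}}$ and $S$ the left shift, let $\xi$ be the coordinate process, and let $\tau$ be the cellular automaton $\tau((a_n)_n)=(\tau_0(a_n,a_{n+1}))_n$ with $\tau_0(1,1)=1$ and $\tau_0=0$ otherwise. For every $n\ge0$, $h_\nu(\tau^n\xi,S)\le3\log(2)\,2^{-n/2}$.
   Context: The coordinate process is $\xi_i(a)=a_i$; $\tau^n\xi$ is the process $((\tau^na)_i)_{i\in\mathbb{Z}}$. For a finite-valued process $\eta$, $h_\nu(\eta,S)=\lim_m\frac1mH_\nu(\eta_{[0,m]})$ with $H_\nu$ Shannon entropy. *)

From mathcomp Require Import all_boot all_order all_algebra.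
From mathcomp Require Import all_classical all_reals all_analysis.
Set Implicit Arguments. Unset Strict Implicit. Unset Printing Implicit Defensive.
Import Order.TTheory GRing.Theory Num.Theory.
Local Open Scope ring_scope.

Definition config := int -> bool.

Definition tau0 (b c : bool) : bool := b && c.

Definition tau (a : config) : config := fun i => tau0 (a i) (a (i + 1)).

Definition tau_iter (n : nat) (a : config) : config := iter n tau a.

(* Extension of a finite word u on the window [0, N] to a configuration
   (the values outside the window are irrelevant for events depending
   only on coordinates in [0, N]; we put 0 there). *)
Definition ext (N : nat) (u : {ffun 'I_N.+1 -> bool}) : config :=
  fun i => match i with
           | Posz k => if insub k is Some j then u j else false
           | Negz _ => false
           end.

(* nu = (1/2 (delta_0 + delta_1))^{\otimes Z}: the probability under nu of an
   event depending only on the coordinates in [0, N] is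
   #{u in {0,1}^{[0,N]} : ext u in E} / 2^(N+1). *)
Definition nu_window {R : realType} (N : nat) (E : config -> bool) : R :=
  #|[set u : {ffun 'I_N.+1 -> bool} | E (ext u)]|%:R / (2 ^+ N.+1).

Definition block (n m : nat) (a : config) : {ffun 'I_m.+1 -> bool} :=
  [ffun i : 'I_m.+1 => tau_iter n a (Posz (nat_of_ord i))].

(* The block (tau^n xi)_[0,m] depends only on coordinates in [0, m+n];
   its law under nu: *)
Definition block_law {R : realType} (n m : nat) (w : {ffun 'I_m.+1 -> bool}) : R :=
  nu_window (m + n) (fun a => block n m a == w).

Definition shannon {R : realType} {X : finType} (p : X -> R) : R :=
  - \sum_(x : X) (if p x == 0 then 0 else p x * ln (p x)).

Definition H_block {R : realType} (n m : nat) : R := shannon (@block_law R n m).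

(* h_nu(tau^n xi, S) is the limit of (1/m) H_nu((tau^n xi)_[0,m]) *)
Definition entropy_seq {R : realType} (n : nat) : nat -> R :=
  fun m => (m%:R)^-1 * H_block n m.

(* Let H(L) be the entropy of the first L symbols of tau^n xi.  Joint entropy
   is at most the sum of the entropies, and nu is shift invariant, so H is
   subadditive and, by Fekete's lemma, H(L)/L converges to inf_L H(L)/L <= H(1).
   Since (tau^n a)_0 = a_0 && ... && a_n, a single symbol equals 1 with
   probability p = 2^-(n+1), and its binary entropy is at most
   p (1 - ln p) = 2^-(n+1) (1 + (n+1) ln 2) <= 3 ln 2 * 2^(-n/2). *)

From mathcomp Require Import all_boot all_order all_algebra.
From mathcomp Require Import all_classical all_reals all_analysis.
From mathcomp Require Import zify ring lra.
Import Order.TTheory GRing.Theory Num.Theory.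
Import numFieldNormedType.Exports.

Set Implicit Arguments. Unset Strict Implicit. Unset Printing Implicit Defensive.
Local Open Scope ring_scope.

Lemma ln_le_subr1 {R : realType} (x : R) : 0 < x -> ln x <= x - 1.
Proof. by move=> x_gt0; have := @le_ln1Dx R (x - 1); rewrite addrCA subrr addr0; apply; lra. Qed.

Lemma binary_entropy_le (R : realType) (p : R) : 0 < p < 1 ->
  - (p * ln p + (1 - p) * ln (1 - p)) <= p * (1 - ln p).
Proof.
case/andP=> p_gt0 p_lt1; have q_gt0 : 0 < 1 - p by rewrite subr_gt0.
suff : - ((1 - p) * ln (1 - p)) <= p by lra.
have : ln (1 - p)^-1 <= (1 - p)^-1 - 1 by apply: ln_le_subr1; rewrite invr_gt0.
rewrite lnV ?posrE // => ln_le.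
rewrite -mulrN; apply: le_trans (ler_wpM2l (ltW q_gt0) ln_le) _.
by rewrite mulrBr mulfV ?gt_eqF // mulr1 opprB addrC subrK.
Qed.

Lemma ln2_ge_half (R : realType) : 1 / 2 <= ln (2 : R).
Proof.
have : ln (2 : R)^-1 <= 2^-1 - 1 by apply: ln_le_subr1; rewrite invr_gt0.
by rewrite lnV ?posrE //; lra.
Qed.

(* With t = 2^(n/2) >= 1 + (n/2) ln 2 and ln 2 >= 1/2, the numerator is at most
   6 t ln 2, while 2^(n+1) = 2 t^2. *)
Lemma pow2_entropy_bound (R : realType) n :
  (2 ^+ n.+1)^-1 * (1 + n.+1%:R * ln (2 : R)) <= 3 * ln 2 * 2 `^ (- (n%:R / 2)).
Proof.
set L := ln (2 : R); have L_ge := ln2_ge_half R; rewrite -/L in L_ge.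
set t := (2 : R) `^ (n%:R / 2); have t_gt0 : 0 < t by rewrite powR_gt0.
have tt : t * t = 2 ^+ n.
  by rewrite -powRD ?pnatr_eq0 ?implybT // -splitr powR_mulrn.
have t_ge : 1 + n%:R / 2 * L <= t.
  by rewrite /t /powR ifF ?pnatr_eq0 //; apply: expR_ge1Dx.
rewrite powRN -/t exprS -tt.
have n_ge0 : 0 <= n%:R :> R by [].
have num_le : 1 + n.+1%:R * L <= 6 * L * t by rewrite -natr1; nra.
have -> : 3 * L * t^-1 = (2 * (t * t))^-1 * (6 * L * t) by field; rewrite gt_eqF.
by apply: ler_wpM2l num_le; rewrite invr_ge0 ltW // !mulr_gt0.
Qed.

Definition depends_on {T : Type} (N : nat) (f : config -> T) :=
  forall a a' : config, (forall k : nat, (k <= N)%N -> a k = a' k) -> f a = f a'.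

Definition shiftn (s : nat) (a : config) : config := fun i => a (i + s%:Z).

Lemma depends_on_le {T : Type} N M (f : config -> T) :
  (N <= M)%N -> depends_on N f -> depends_on M f.
Proof. by move=> NM fN a a' aa'; apply: fN => k kN; apply: aa'; apply: leq_trans NM. Qed.

Lemma depends_on_comp {T U : Type} N (f : config -> T) (g : T -> U) :
  depends_on N f -> depends_on N (g \o f).
Proof. by move=> fN a a' aa' /=; rewrite (fN a a'). Qed.

Lemma depends_on_shift {T : Type} s N (f : config -> T) :
  depends_on N f -> depends_on (s + N) (f \o shiftn s).
Proof.
move=> fN a a' aa'; apply: fN => k kN; rewrite /shiftn -PoszD; apply: aa'.
by rewrite addnC leq_add2l.
Qed.

Lemma shiftnS s a : shiftn s.+1 a = shiftn s (shiftn 1 a).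
Proof. by apply: funext => i; rewrite /shiftn -addrA -PoszD addn1. Qed.

Definition ffun_ins k (i0 : 'I_k.+1) (b : bool) (v : {ffun 'I_k -> bool}) :
  {ffun 'I_k.+1 -> bool} := [ffun i => if unlift i0 i is Some j then v j else b].

Lemma ffun_ins_lift k (i0 : 'I_k.+1) b v j : ffun_ins i0 b v (lift i0 j) = v j.
Proof. by rewrite ffunE liftK. Qed.

Lemma big_ffun_ins (T : Type) (idx : T) (op : Monoid.com_law idx) k (i0 : 'I_k.+1)
    (F : {ffun 'I_k.+1 -> bool} -> T) :
  \big[op/idx]_u F u =
  \big[op/idx]_(b : bool) \big[op/idx]_(v : {ffun 'I_k -> bool}) F (ffun_ins i0 b v).
Proof.
rewrite pair_bigA (reindex (fun p => ffun_ins i0 p.1 p.2)) //=.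
exists (fun u => (u i0, [ffun j => u (lift i0 j)])) => [[b v] _ | u _] /=.
  congr pair; first by rewrite ffunE unlift_none.
  by apply/ffunP => j; rewrite ffunE ffun_ins_lift.
by apply/ffunP => i; rewrite ffunE; case: unliftP => [j ->|->]; rewrite ?ffunE.
Qed.

Lemma card_ffun_ins k (i0 : 'I_k.+1) (P : pred {ffun 'I_k.+1 -> bool})
    (Q : pred {ffun 'I_k -> bool}) :
  (forall b v, P (ffun_ins i0 b v) = Q v) -> #|[set u | P u]| = (2 * #|[set v | Q v]|)%N.
Proof.
move=> PQ; rewrite -!sum1dep_card !big_mkcond (big_ffun_ins _ i0) big_bool /=.
have sumQ b :
  (\sum_v (if P (ffun_ins i0 b v) then 1 else 0) = \sum_v (if Q v then 1 else 0))%N.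
  by apply: eq_bigr => v _; rewrite PQ.
by rewrite !sumQ -big_mkcond addnn mul2n.
Qed.

Lemma ext_ord N (u : {ffun 'I_N.+1 -> bool}) (i : 'I_N.+1) : ext u i = u i.
Proof. by rewrite /ext valK. Qed.

Lemma ext_ffun_ins_lift N (i0 : 'I_N.+2) b v (j : 'I_N.+1) :
  ext (ffun_ins i0 b v) (lift i0 j) = ext v j.
Proof. by rewrite !ext_ord ffun_ins_lift. Qed.

Section WindowMeasure.
Variable R : realType.

Lemma nu_window_ins N (i0 : 'I_N.+2) (E E' : config -> bool) :
  (forall b v, E' (ext (ffun_ins i0 b v)) = E (ext v)) ->
  nu_window (R:=R) N.+1 E' = nu_window N E.
Proof.
move=> EE'; rewrite /nu_window (@card_ffun_ins _ i0 (fun u => E' (ext u)) _ EE').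
by rewrite natrM exprS invfM mulrACA divff ?mul1r.
Qed.

Lemma nu_windowS N (E : config -> bool) : depends_on N E ->
  nu_window (R:=R) N.+1 E = nu_window N E.
Proof.
move=> EN; apply: (nu_window_ins (i0 := ord_max)) => b v; apply: EN => k kN.
have kN1 : (k < N.+1)%N by [].
have lift_k : lift ord_max (Ordinal kN1) = k :> nat by rewrite /= /bump leqNgt ltnS kN.
by rewrite -[in LHS]lift_k ext_ffun_ins_lift.
Qed.

Lemma nu_window_shift1 N (E : config -> bool) : depends_on N E ->
  nu_window (R:=R) N.+1 (E \o shiftn 1) = nu_window N E.
Proof.
move=> EN; apply: (nu_window_ins (i0 := ord0)) => b v; apply: EN => k kN.
have kN1 : (k < N.+1)%N by [].
rewrite /shiftn -PoszD addn1 -[k.+1]/(nat_of_ord (lift ord0 (Ordinal kN1))).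
exact: ext_ffun_ins_lift.
Qed.

Lemma nu_window_widen d N (E : config -> bool) : depends_on N E ->
  nu_window (R:=R) (d + N) E = nu_window N E.
Proof.
move=> EN; elim: d => [//|d IHd]; rewrite addSn nu_windowS ?IHd //.
by apply: depends_on_le EN; rewrite leq_addl.
Qed.

Lemma nu_window_shift s N (E : config -> bool) : depends_on N E ->
  nu_window (R:=R) (s + N) (E \o shiftn s) = nu_window N E.
Proof.
move=> EN; elim: s => [|s IHs].
  rewrite add0n; congr nu_window; apply: funext => a; congr E; apply: funext => i.
  by rewrite /shiftn -[Posz 0]/(0 : int) addr0.
have -> : E \o shiftn s.+1 = (E \o shiftn s) \o shiftn 1.
  by apply: funext => a; rewrite /= shiftnS.
by rewrite addSn nu_window_shift1 ?IHs //; apply: depends_on_shift.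
Qed.

End WindowMeasure.

Lemma tau_iterE n a i : tau_iter n a i = [forall j : 'I_n.+1, a (i + (j : nat)%:Z)].
Proof.
elim: n i => [|n IHn] i.
  by apply/idP/forallP => [ai j|/(_ ord0)]; rewrite ?(ord1 j) addr0.
rewrite /tau_iter iterS -/(tau_iter n a) /tau /tau0 !IHn.
apply/andP/forallP => [[/forallP a_i /forallP a_i1] j|a_ij].
  case: (ltnP j n.+1) => [jn|nj]; first exact: (a_i (Ordinal jn)).
  have -> : (j : nat) = n.+1 by have := ltn_ord j; lia.
  by have := a_i1 ord_max; rewrite -addrA -PoszD add1n.
split; apply/forallP => j; first exact: (a_ij (widen_ord (leqnSn _) j)).
by have := a_ij (lift ord0 j); rewrite /= /bump /= add1n -addrA -PoszD add1n.
Qed.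

Lemma tau_iter_shift n s a i : tau_iter n (shiftn s a) i = tau_iter n a (i + s%:Z).
Proof. by rewrite !tau_iterE; apply: eq_forallb => j; rewrite /shiftn addrAC. Qed.

Lemma block_depends_on n m : depends_on (m + n) (block n m).
Proof.
move=> a a' aa'; apply/ffunP => i; rewrite !ffunE !tau_iterE.
apply: eq_forallb => j; rewrite -PoszD; apply: aa'.
by have := ltn_ord i; have := ltn_ord j; lia.
Qed.

Definition cat_block {m1 m2} (w : {ffun 'I_m1.+1 -> bool} * {ffun 'I_m2.+1 -> bool}) :
  {ffun 'I_(m1 + m2.+1).+1 -> bool} :=
  [ffun i : 'I_(m1 + m2.+1).+1 => if (i < m1.+1)%N then w.1 (inord i)
                                   else w.2 (inord (i - m1.+1))].

Lemma block_cat n m1 m2 a :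
  block n (m1 + m2.+1) a = cat_block (block n m1 a, block n m2 (shiftn m1.+1 a)).
Proof.
apply/ffunP => i; rewrite !ffunE /=; case: ifPn => [im1|]; first by rewrite inordK.
rewrite -leqNgt => m1i; rewrite inordK ?tau_iter_shift -?PoszD ?subnK //.
by have := ltn_ord i; lia.
Qed.



Lemma card_window N : #|{ffun 'I_N.+1 -> bool}| = (2 ^ N.+1)%N.
Proof. by rewrite card_ffun card_bool card_ord. Qed.

Section WindowEntropy.
Variable R : realType.

Definition window_entropy {X : finType} (N : nat) (f : config -> X) : R :=
  shannon (fun x => nu_window N (fun a => f a == x)).

Definition nu_fiber {X : finType} N (f : config -> X) (u : {ffun 'I_N.+1 -> bool}) : R :=
  nu_window N (fun a => f a == f (ext u)).

Lemma sum_fibers {T X : finType} (g : T -> X) (F : X -> R) :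
  \sum_u F (g u) = \sum_x #|[set u | g u == x]|%:R * F x.
Proof.
rewrite (partition_big g xpredT) //=; apply: eq_bigr => x _.
rewrite (eq_bigr (fun _ => F x)); last by move=> u /eqP ->.
rewrite (eq_bigl (fun u => u \in [set u | g u == x])); last by move=> u; rewrite inE.
by rewrite sumr_const mulr_natl.
Qed.

Lemma nu_window_ge0 N E : 0 <= nu_window (R:=R) N E.
Proof. by rewrite divr_ge0 ?exprn_ge0. Qed.

Lemma sum_nu_window_fibers {X : finType} N (f : config -> X) :
  \sum_x nu_window (R:=R) N (fun a => f a == x) = 1.
Proof.
have := sum_fibers (fun u : {ffun 'I_N.+1 -> bool} => f (ext u)) (fun _ => 1 : R).
under [X in _ = X -> _]eq_bigr do rewrite mulr1.
rewrite -mulr_suml => <-.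
by rewrite sumr_const card_window natrX divff // expf_neq0.
Qed.

Lemma nu_fiber_gt0 {X : finType} N (f : config -> X) (u : {ffun 'I_N.+1 -> bool}) :
  0 < nu_fiber f u.
Proof.
rewrite divr_gt0 ?exprn_gt0 // ltr0n.
by apply/card_gt0P; exists u; rewrite inE.
Qed.

Lemma nu_fiber_le1 {X : finType} N (f : config -> X) (u : {ffun 'I_N.+1 -> bool}) :
  nu_fiber f u <= 1.
Proof.
rewrite ler_pdivrMr ?exprn_gt0 // mul1r -natrX -card_window ler_nat.
exact: max_card.
Qed.

Lemma window_entropyE {X : finType} N (f : config -> X) :
  window_entropy N f =
  - ((2 ^+ N.+1)^-1 * \sum_(u : {ffun 'I_N.+1 -> bool}) ln (nu_fiber f u)).
Proof.
rewrite /window_entropy /shannon /nu_fiber.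
rewrite (sum_fibers (fun u => f (ext u)) (fun x => ln (nu_window N (fun a => f a == x)))).
congr (- _); rewrite mulr_sumr; apply: eq_bigr => x _; rewrite /nu_window.
set c := #|_|; have [->|c_gt0] := posnP c; first by rewrite !mul0r eqxx mulr0.
have c_neq0 : c%:R / 2 ^+ N.+1 != 0 :> R.
  by rewrite mulf_neq0 ?invr_eq0 ?expf_neq0 // pnatr_eq0 -lt0n.
by rewrite (negbTE c_neq0) mulrAC mulrC.
Qed.

Lemma window_entropy_ge0 {X : finType} N (f : config -> X) : 0 <= window_entropy N f.
Proof.
rewrite window_entropyE oppr_ge0 pmulr_rle0 ?invr_gt0 ?exprn_gt0 //.
by apply: sumr_le0 => u _; apply/ln_le0/nu_fiber_le1.
Qed.

Lemma window_entropy_comp {X Y : finType} N (f : config -> X) (phi : X -> Y) :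
  window_entropy N (phi \o f) <= window_entropy N f.
Proof.
rewrite !window_entropyE lerN2 ler_pM2l ?invr_gt0 ?exprn_gt0 //.
apply: ler_sum => u _; rewrite ler_ln ?posrE ?nu_fiber_gt0 //.
rewrite ler_pM2r ?invr_gt0 ?exprn_gt0 // ler_nat.
by apply/subset_leq_card/fintype.subsetP => v; rewrite !inE /= => /eqP ->.
Qed.

(* Gibbs' inequality: apply [ln x <= x - 1] to [x = pf * pg / pfg]; the ratios
   sum to at most [2 ^ N.+1] because the product of the marginals has mass 1. *)
Lemma window_entropy_pair {X Y : finType} N (f : config -> X) (g : config -> Y) :
  window_entropy N (fun a => (f a, g a)) <= window_entropy N f + window_entropy N g.
Proof.
pose M : R := 2 ^+ N.+1; have M_gt0 : 0 < M by rewrite exprn_gt0.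
pose pf x := nu_window (R:=R) N (fun a => f a == x).
pose pg y := nu_window (R:=R) N (fun a => g a == y).
pose pfg z := nu_window (R:=R) N (fun a => (f a, g a) == z).
pose fg (u : {ffun 'I_N.+1 -> bool}) := (f (ext u), g (ext u)).
have ratio_sum : \sum_u pf (fg u).1 * pg (fg u).2 / pfg (fg u) <= M.
  rewrite (sum_fibers fg (fun z => pf z.1 * pg z.2 / pfg z)).
  apply: (@le_trans _ _ (\sum_z M * (pf z.1 * pg z.2))).
    apply: ler_sum => z _; rewrite /pfg /nu_window -/M /fg; set c := #|_|.
    have pfpg_ge0 : 0 <= pf z.1 * pg z.2 by rewrite mulr_ge0 ?nu_window_ge0.
    have [->|c_gt0] := posnP c; first by rewrite mul0r mulr_ge0 // ltW.
    suff -> : c%:R * (pf z.1 * pg z.2 / (c%:R / M)) = M * (pf z.1 * pg z.2) by [].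
    by field; rewrite pnatr_eq0 -lt0n c_gt0 gt_eqF.
  by rewrite -mulr_sumr -(pair_bigA _ (fun x y => pf x * pg y)) -big_distrlr /=
    !sum_nu_window_fibers !mulr1.
have ln_ratio (a b c : R) :
    0 < a -> 0 < b -> 0 < c -> ln a + ln b - ln c <= a * b / c - 1.
  move=> a_gt0 b_gt0 c_gt0; rewrite -lnM ?posrE // -ln_div ?posrE ?mulr_gt0 //.
  by apply: ln_le_subr1; rewrite divr_gt0 ?mulr_gt0.
rewrite !window_entropyE -opprD lerN2 -mulrDr ler_pM2l ?invr_gt0 //.
rewrite -big_split /= -subr_le0 -sumrB.
apply: (@le_trans _ _ (\sum_u (pf (fg u).1 * pg (fg u).2 / pfg (fg u) - 1))).
  by apply: ler_sum => u _; apply: ln_ratio; apply: nu_fiber_gt0.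
by rewrite sumrB sumr_const card_window natrX subr_le0.
Qed.

Lemma window_entropy_widen {X : finType} d N (f : config -> X) : depends_on N f ->
  window_entropy (d + N) f = window_entropy N f.
Proof.
move=> fN; congr shannon; apply: funext => x.
by apply: nu_window_widen; apply: (depends_on_comp (pred1 x) fN).
Qed.

Lemma window_entropy_shift {X : finType} s N (f : config -> X) : depends_on N f ->
  window_entropy (s + N) (f \o shiftn s) = window_entropy N f.
Proof.
move=> fN; congr shannon; apply: funext => x.
exact (nu_window_shift R s (depends_on_comp (pred1 x) fN)).
Qed.

Lemma nu_windowC N (E : config -> bool) :
  nu_window (R:=R) N (fun a => ~~ E a) = 1 - nu_window N E.
Proof.
have := sum_nu_window_fibers N E; rewrite big_bool /=.
have -> : (fun a => E a == true) = E by apply: funext => a; case: (E a).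
have -> : (fun a => E a == false) = (fun a => ~~ E a) by apply: funext => a; case: (E a).
by move=> <-; rewrite addrAC subrr add0r.
Qed.

Lemma window_entropy_bool N (E : config -> bool) (p : R) :
  nu_window N E = p -> 0 < p < 1 ->
  window_entropy N E = - (p * ln p + (1 - p) * ln (1 - p)).
Proof.
move=> pE /andP[p_gt0 p_lt1]; rewrite /window_entropy /shannon big_bool /=.
have -> : (fun a => E a == true) = E by apply: funext => a; case: (E a).
have -> : (fun a => E a == false) = (fun a => ~~ E a) by apply: funext => a; case: (E a).
by rewrite nu_windowC pE !gt_eqF ?subr_gt0.
Qed.

End WindowEntropy.

Local Open Scope classical_set_scope.
Local Open Scope ring_scope.

Section Fekete.
Variables (R : realType) (G : nat -> R).
Hypothesis G_ge0 : forall k, 0 <= G k.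
Hypothesis G_subadd : forall k l, G (k + l) <= G k + G l.

Lemma subadd_mul_add q k r : G (q * k + r) <= q%:R * G k + G r.
Proof.
elim: q => [|q IHq]; first by rewrite mul0n add0n mul0r add0r.
rewrite mulSn -addnA mulrSr mulrDl mul1r [_ * _ + G k]addrC -addrA.
by apply: le_trans (G_subadd _ _) _; rewrite lerD2l.
Qed.

Lemma subadd_le_linear r : G r <= G 0 + r%:R * G 1.
Proof.
elim: r => [|r IHr]; first by rewrite mul0r addr0.
rewrite -addn1 natrD mulrDl mul1r addrA.
by apply: le_trans (G_subadd _ _) _; rewrite lerD2r.
Qed.

Lemma subadd_ratio_le K m : (0 < K)%N -> (0 < m)%N ->
  G m / m%:R <= G K / K%:R + (G 0 + K%:R * G 1) / m%:R.
Proof.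
move=> K_gt0 m_gt0; have Kr_gt0 : (0 : R) < K%:R by rewrite ltr0n.
have mr_gt0 : (0 : R) < m%:R by rewrite ltr0n.
have := subadd_mul_add (m %/ K) K (m %% K); rewrite -divn_eq => Gm.
have q_le : (m %/ K)%:R <= m%:R / K%:R :> R.
  by rewrite ler_pdivlMr // -natrM ler_nat leq_trunc_div.
have Gr : G (m %% K) <= G 0 + K%:R * G 1.
  apply: le_trans (subadd_le_linear _) _; rewrite lerD2l ler_wpM2r //.
  by rewrite ler_nat ltnW // ltn_mod.
rewrite ler_pdivrMr // mulrDl divfK ?gt_eqF // mulrAC.
apply: le_trans Gm _; apply: lerD => //.
by rewrite -mulrA [X in _ <= X]mulrC; apply: ler_wpM2r.
Qed.

Lemma has_inf_ratio : has_inf (range (fun k => G k.+1 / k.+1%:R)).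
Proof.
split; first by exists (G 1 / 1); exists 0%N.
by exists 0 => _ [k _ <-]; rewrite divr_ge0.
Qed.

Lemma inf_ratio_le k : inf (range (fun k => G k.+1 / k.+1%:R)) <= G k.+1 / k.+1%:R.
Proof. by have [_ ratios_lb] := has_inf_ratio; apply: ge_inf ratios_lb _ _; exists k. Qed.

Lemma fekete : (fun m => G m / m%:R) @ \oo --> inf (range (fun k => G k.+1 / k.+1%:R)).
Proof.
set h := inf _; apply/cvgrPdist_le => e e_gt0.
have e2_gt0 : 0 < e / 2 by rewrite divr_gt0.
have [_ [k _ <-] hk] := inf_adherent e2_gt0 has_inf_ratio.
set C := G 0 + k.+1%:R * G 1.
have C_ge0 : 0 <= C by rewrite addr_ge0 ?mulr_ge0.
exists (Num.truncn (2 * C / e)).+1 => // m /= m_large.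
have m_gt0 : (0 < m)%N by apply: leq_trans m_large.
have mr_gt0 : (0 : R) < m%:R by rewrite ltr0n.
have h_le : h <= G m / m%:R by rewrite -(prednK m_gt0); apply: inf_ratio_le.
have C_small : C / m%:R <= e / 2.
  have : 2 * C / e < m%:R by apply: lt_le_trans (truncnS_gt _) _; rewrite ler_nat.
  rewrite ltr_pdivrMr // ler_pdivrMr //; nra.
have := subadd_ratio_le (ltn0Sn k) m_gt0; rewrite -/C => ratio_le.
rewrite -/h in hk; move: h_le ratio_le hk C_small.
move: (G m / m%:R) (G k.+1 / k.+1%:R) (C / m%:R) => ratio_m ratio_K Cm.
by rewrite ler_norml; lra.
Qed.

Lemma fekete_shift :
  (fun m => m%:R^-1 * G m.+1) @ \oo --> inf (range (fun k => G k.+1 / k.+1%:R)).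
Proof.
set h := inf _.
have ratio_cvg : (fun m => G m.+1 / m.+1%:R) @ \oo --> h.
  by have := fekete; rewrite -cvg_shiftS.
have inv_cvg : (fun m => m%:R^-1 : R) @ \oo --> 0.
  by rewrite -cvg_shiftS; exact: cvg_harmonic.
rewrite -[h]addr0 -(mulr0 h).
apply: cvg_trans (cvgD ratio_cvg (cvgM ratio_cvg inv_cvg)).
apply: near_eq_cvg; exists 1%N => // m /= m_gt0.
rewrite !fctE /= -natr1; field.
by rewrite pnatr_eq0 -lt0n m_gt0 natr1 pnatr_eq0.
Qed.

End Fekete.

Section BlockEntropy.
Variables (R : realType) (n : nat).

(* The entropy of the first [L] symbols; [H_block n m] counts the [m.+1] symbols
   at positions [0..m]. *)
Definition block_entropy (L : nat) : R := if L is m.+1 then H_block n m else 0.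

Lemma H_blockE m : H_block n m = window_entropy R (m + n) (block n m).
Proof. by []. Qed.

Lemma block_entropy_ge0 L : 0 <= block_entropy L.
Proof. by case: L => [|m] //=; apply: window_entropy_ge0. Qed.

Lemma block_entropy_subadd L1 L2 :
  block_entropy (L1 + L2) <= block_entropy L1 + block_entropy L2.
Proof.
case: L1 => [|m1]; first by rewrite add0r.
case: L2 => [|m2]; first by rewrite addn0 addr0.
rewrite addSn /= !H_blockE.
have -> : block n (m1 + m2.+1) =
    cat_block \o (fun a => (block n m1 a, (block n m2 \o shiftn m1.+1) a)).
  by apply: funext => a; rewrite /= block_cat.
apply: le_trans (window_entropy_comp _ _ _ cat_block) _.
apply: le_trans (window_entropy_pair _ _ (block n m1) (block n m2 \o shiftn m1.+1)) _.
have -> : (m1 + m2.+1 + n = m2.+1 + (m1 + n))%N by lia.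
rewrite window_entropy_widen; last exact: block_depends_on.
have -> : (m2.+1 + (m1 + n) = m1.+1 + (m2 + n))%N by lia.
by rewrite window_entropy_shift; last exact: block_depends_on.
Qed.

End BlockEntropy.


Lemma H_block0E (R : realType) n :
  H_block n 0 = window_entropy R n (fun a => tau_iter n a 0).
Proof.
rewrite H_blockE add0n; apply/le_anti/andP; split.
  have -> : block n 0 = (fun b => [ffun=> b]) \o (fun a => tau_iter n a 0).
    by apply: funext => a; apply/ffunP => i; rewrite !ffunE (ord1 i).
  exact: window_entropy_comp.
have -> : (fun a => tau_iter n a 0) = (fun w => w ord0) \o block n 0.
  by apply: funext => a; rewrite /= ffunE.
exact: (window_entropy_comp R n (block n 0) (fun w => w ord0)).
Qed.



Lemma nu_window_tau_iter0 (R : realType) n :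
  nu_window (R:=R) n (fun a => tau_iter n a 0) = (2 ^+ n.+1)^-1.
Proof.
rewrite /nu_window.
suff -> : #|[set u : {ffun 'I_n.+1 -> bool} | tau_iter n (ext u) 0]%SET| = 1%N.
  by rewrite mul1r.
rewrite -(cards1 ([ffun=> true] : {ffun 'I_n.+1 -> bool})); apply: eq_card => u.
rewrite !inE tau_iterE; apply/forallP/eqP => [u_true|-> j].
  by apply/ffunP => j; have := u_true j; rewrite add0r ext_ord ffunE.
by rewrite add0r ext_ord ffunE.
Qed.

Lemma H_block0_le (R : realType) n :
  H_block n 0 <= (2 ^+ n.+1)^-1 * (1 + n.+1%:R * ln (2 : R)).
Proof.
have p_gt0 : 0 < (2 ^+ n.+1)^-1 :> R by rewrite invr_gt0 exprn_gt0.
have p_lt1 : (2 ^+ n.+1)^-1 < 1 :> R by rewrite invf_lt1 ?exprn_gt0 // exprn_egt1 ?ltr1n.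
rewrite H_block0E (window_entropy_bool (nu_window_tau_iter0 R n)) ?p_gt0 //.
have -> : 1 + n.+1%:R * ln (2 : R) = 1 - ln (2 ^+ n.+1)^-1.
  by rewrite lnV ?posrE ?exprn_gt0 // lnXn // mulr_natl opprK.
by apply: binary_entropy_le; rewrite p_gt0 p_lt1.
Qed.



Theorem proposition4p3 (R : realType) (n : nat) :
  exists h : R,
    (@entropy_seq R n @ \oo --> h) /\
    h <= 3 * ln 2 * (2 `^ (- (n%:R / 2))).
Proof.
pose G := block_entropy R n.
exists (inf (range (fun k => G k.+1 / k.+1%:R))); split.
  exact: fekete_shift (block_entropy_ge0 R n) (block_entropy_subadd R n).
apply: le_trans (inf_ratio_le (block_entropy_ge0 R n) 0) _; rewrite divr1.
exact: le_trans (H_block0_le R n) (pow2_entropy_bound R n).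
Qed.
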